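(* Let $V=K[y_1,\dots,y_s]$ be a polynomial ring over a field $K$, bigraded by $\operatorname{bideg}(y_i)=(d_i,1)$ with integers $d_i\ge1$, and let $M$ be a finitely generated bigraded $V$-module. For each $k$ with $M_{( *,k)}:=\bigoplus_d M_{(d,k)}\neq0$ put $\alpha_M(k)=\min\{d:M_{(d,k)}\neq0\}$ and $\omega_M(k)=\max\{d:M_{(d,k)}\neq0\}$. Then either $M_{( *,k)}=0$ for all $k\gg0$, or there exist integers $a,b,c,e$ such that $\alpha_M(k)=ak+b$ and $\omega_M(k)=ck+e$ for all $k\gg0$. *)

From HB Require Import structures.
From mathcomp Require Import all_boot all_order all_algebra.
Set Implicit Arguments. Unset Strict Implicit. Unset Printing Implicit Defensive.
Import Order.TTheory GRing.Theory Num.Theory.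
Local Open Scope ring_scope.

(* A module over V = K[y_1,...,y_s] is encoded (as usual) by a K-vector space
   M together with s pairwise commuting K-linear endomorphisms Y i
   (the action of the variable y_i; indices i : 'I_s). *)
Definition poly_module_action (K : fieldType) (M : lmodType K) (s : nat)
    (Y : 'I_s -> M -> M) : Prop :=
  (forall i (a : K) (x y : M), Y i (a *: x + y) = a *: Y i x + Y i y) /\
  (forall i j (x : M), Y i (Y j x) = Y j (Y i x)).

(* G d k is the homogeneous component M_(d,k) (as a predicate on M). *)
Definition bigraded_module (K : fieldType) (M : lmodType K) (s : nat)
    (deg : 'I_s -> nat) (Y : 'I_s -> M -> M) (G : int -> int -> M -> Prop) : Prop :=
  poly_module_action Y /\
  (forall d k, G d k 0) /\
  (forall d k (a : K) (x y : M), G d k x -> G d k y -> G d k (a *: x + y)) /\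
  (forall m : M, exists (ds : seq (int * int)) (xs : int * int -> M),
      (forall p, p \in ds -> G p.1 p.2 (xs p)) /\ m = \sum_(p <- ds) xs p) /\
  (forall (ds : seq (int * int)) (xs : int * int -> M),
      uniq ds -> (forall p, p \in ds -> G p.1 p.2 (xs p)) ->
      \sum_(p <- ds) xs p = 0 -> forall p, p \in ds -> xs p = 0) /\
  (forall i d k (x : M), G d k x -> G (d + (deg i)%:Z) (k + 1) (Y i x)).

Inductive generated_by (K : fieldType) (M : lmodType K) (s : nat)
    (Y : 'I_s -> M -> M) (gens : seq M) : M -> Prop :=
  | gen_in x : x \in gens -> generated_by Y gens x
  | gen_zero : generated_by Y gens 0
  | gen_add x y : generated_by Y gens x -> generated_by Y gens y ->
      generated_by Y gens (x + y)
  | gen_scale (a : K) x : generated_by Y gens x -> generated_by Y gens (a *: x)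
  | gen_act i x : generated_by Y gens x -> generated_by Y gens (Y i x).

Definition finitely_generated (K : fieldType) (M : lmodType K) (s : nat)
    (Y : 'I_s -> M -> M) : Prop :=
  exists gens : seq M, forall m : M, generated_by Y gens m.

Definition comp_nz (K : fieldType) (M : lmodType K) (G : int -> int -> M -> Prop)
    (d k : int) : Prop :=
  exists m : M, G d k m /\ m <> 0.

Definition is_alpha (K : fieldType) (M : lmodType K) (G : int -> int -> M -> Prop)
    (k a : int) : Prop :=
  comp_nz G a k /\ forall d, comp_nz G d k -> a <= d.

Definition is_omega (K : fieldType) (M : lmodType K) (G : int -> int -> M -> Prop)
    (k w : int) : Prop :=
  comp_nz G w k /\ forall d, comp_nz G d k -> d <= w.

(* Choose finitely many homogeneous generators g.  Every nonzero component
   M_(d,k) contains a nonzero y_w g of bidegree bideg(g) + bideg(y_w).  A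
   variable y_i either acts nilpotently on g (then y_i^B g = 0 for a uniform B)
   or does not.  Hence for k beyond a threshold every such monomial contains a
   variable acting non-nilpotently on its generator; if there is none, M
   vanishes in large second degree.  Otherwise, with c (resp. a) the largest
   (resp. smallest) degree of such a variable, omega_M(k) - c k (resp.
   alpha_M(k) - a k) is bounded, attained along a ray y_i^n g, and monotone in
   k, hence eventually constant. *)

From Stdlib Require Import Classical.
From HB Require Import structures.
From mathcomp Require Import all_boot all_order all_algebra zify.
Set Implicit Arguments. Unset Strict Implicit. Unset Printing Implicit Defensive.
Import Order.TTheory GRing.Theory Num.Theory.
Local Open Scope ring_scope.

Lemma int_max_ex (P : int -> Prop) (U : int) :
  (exists x, P x) -> (forall x, P x -> x <= U) ->
  exists x, P x /\ forall y, P y -> y <= x.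
Proof.
move=> [x0 Px0] le_U.
suff: forall n : nat, forall x, P x -> U - x <= n%:Z ->
    exists x, P x /\ forall y, P y -> y <= x.
  by move=> /(_ `|U - x0|%N x0 Px0); apply; have := le_U _ Px0; lia.
elim=> [|n IHn] x Px gap.
  by exists x; split=> // y /le_U; lia.
case: (classic (exists y, P y /\ x < y)) => [[y [Py lt_xy]]|no_larger].
  by apply: (IHn y Py); lia.
exists x; split=> // y Py; case: (lerP y x) => // lt_xy.
by case: no_larger; exists y.
Qed.

Lemma int_min_ex (P : int -> Prop) (L : int) :
  (exists x, P x) -> (forall x, P x -> L <= x) ->
  exists x, P x /\ forall y, P y -> x <= y.
Proof.
move=> [x0 Px0] ge_L.
have [|y Py|x [Px x_max]] := @int_max_ex (fun x => P (- x)) (- L).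
- by exists (- x0); rewrite opprK.
- by have := ge_L _ Py; lia.
by exists (- x); split=> // y Py; have := x_max (- y); rewrite opprK => /(_ Py); lia.
Qed.

Lemma int_bound_seq (T : eqType) (X : seq T) (f : T -> int) :
  exists u, forall x, x \in X -> f x <= u.
Proof.
elim: X => [|x X [u le_u]]; first by exists 0.
exists (Num.max (f x) u) => y; rewrite in_cons => /orP[/eqP ->|yX].
  by rewrite le_max lexx.
by rewrite le_max le_u ?orbT.
Qed.

Lemma uniform_bound_seq (T : eqType) (X : seq T) (P : T -> nat -> Prop) :
  (forall x N N', (N <= N')%N -> P x N -> P x N') ->
  (forall x, x \in X -> exists N, P x N) -> exists N, forall x, x \in X -> P x N.
Proof.
move=> P_mono; elim: X => [|x X IHX] P_ex; first by exists 0%N.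
have [N1 PN1] := P_ex x (mem_head _ _).
have [|N2 PN2] := IHX; first by move=> y yX; apply: P_ex; rewrite in_cons yX orbT.
exists (maxn N1 N2) => y; rewrite in_cons => /orP[/eqP ->|yX].
  exact: P_mono (leq_maxl _ _) PN1.
exact: P_mono (leq_maxr _ _) (PN2 _ yX).
Qed.

Lemma nonincreasing_eventually_constant (F : int -> int -> Prop) (L k1 : int) :
  (forall k, k1 <= k -> exists v, F k v) ->
  (forall k v, k1 <= k -> F k v -> L <= v) ->
  (forall k v v', k1 <= k -> F k v -> F (k + 1) v' -> v' <= v) ->
  exists v k0, forall k, k0 <= k -> F k v.
Proof.
move=> F_ex F_low F_mono.
pose attained v := exists2 k, k1 <= k & F k v.
have [|v [k kk Fv]|vm [[k2 k12 Fvm] vm_min]] := @int_min_ex attained L.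
- by have [v Fv] := F_ex k1 (lexx _); exists v, k1.
- exact: F_low kk Fv.
have stable n : forall v, F (k2 + n%:Z + 1) v -> v = vm.
  have attained_after v m : F (k2 + m%:Z + 1) v -> attained v.
    by move=> Fv; exists (k2 + m%:Z + 1) => //; lia.
  elim: n => [|n IHn] v Fv; apply/eqP;
    rewrite eq_le (vm_min v (attained_after _ _ Fv)) andbT.
    by apply: (F_mono k2) => //; rewrite -[k2]addr0.
  have [|u Fu] := F_ex (k2 + n%:Z + 1); first lia.
  rewrite -(IHn u Fu); apply: (F_mono _ _ _ _ Fu); first lia.
  by have <- : k2 + n.+1%:Z + 1 = k2 + n%:Z + 1 + 1 by lia.
exists vm, (k2 + 1) => k kk.
have [|u Fu] := F_ex k; first lia.
have Ek : k = k2 + (absz (k - k2 - 1)%R)%:Z + 1 by lia.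
by rewrite -(stable (absz (k - k2 - 1)%R) u) // -Ek.
Qed.

Lemma eventually_linear_max (S : int -> int -> Prop) (c C0 C1 k1 : int) :
  (forall k d, k1 <= k -> S k d -> d <= c * k + C1) ->
  (forall k, k1 <= k -> S k (c * k + C0)) ->
  (forall k d, k1 <= k -> S (k + 1) d -> exists2 d', S k d' & d <= d' + c) ->
  exists e k0, forall k, k0 <= k ->
    S k (c * k + e) /\ forall d, S k d -> d <= c * k + e.
Proof.
move=> upper witness step.
have recentre k d : c * k + (d - c * k) = d by rewrite [c * k + _]addrC addrNK.
pose is_max_offset k v :=
  S k (c * k + v) /\ forall v', S k (c * k + v') -> v' <= v.
have [||| e [k0 max_e]] :=
    @nonincreasing_eventually_constant is_max_offset C0 k1.
- move=> k kk; apply: (@int_max_ex _ C1); first by exists C0; exact: witness.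
  by move=> v /(upper _ _ kk); lia.
- by move=> k v kk [_ v_max]; apply: v_max; exact: witness.
- move=> k v v' kk [_ v_max] [Sv' _].
  have [d' Sd' le_d'] := step _ _ kk Sv'.
  have := v_max (d' - c * k); rewrite recentre => /(_ Sd').
  by move: le_d'; rewrite mulrDr mulr1; lia.
exists e, k0 => k kk; have [Se e_max] := max_e k kk; split=> // d Sd.
by have := e_max (d - c * k); rewrite recentre => /(_ Sd); lia.
Qed.

Lemma eventually_linear_min (S : int -> int -> Prop) (a C0 C1 k1 : int) :
  (forall k d, k1 <= k -> S k d -> a * k + C1 <= d) ->
  (forall k, k1 <= k -> S k (a * k + C0)) ->
  (forall k d, k1 <= k -> S (k + 1) d -> exists2 d', S k d' & d' + a <= d) ->
  exists e k0, forall k, k0 <= k ->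
    S k (a * k + e) /\ forall d, S k d -> a * k + e <= d.
Proof.
move=> lower witness step.
have [||| e [k0 max_e]] :=
    @eventually_linear_max (fun k d => S k (- d)) (- a) (- C0) (- C1) k1.
- by move=> k d kk /(lower _ _ kk); rewrite mulNr; lia.
- by move=> k kk; rewrite mulNr -opprD opprK; exact: witness.
- move=> k d kk /(step _ _ kk) [d' Sd' le_d'].
  by exists (- d'); [rewrite opprK | lia].
exists (- e), k0 => k kk; have [Se e_max] := max_e k kk.
split; first by move: Se; rewrite mulNr opprD opprK.
by move=> d Sd; have := e_max (- d); rewrite opprK mulNr => /(_ Sd); lia.
Qed.

Lemma sum_pred1_uniq (T : eqType) (V : nmodType) (r : seq T) (x : T) (v : V) :
  uniq r -> x \in r -> \sum_(p <- r) (if x == p then v else 0) = v.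
Proof.
move=> r_uniq xr; rewrite (bigD1_seq x) //= eqxx big1 ?addr0 // => p.
by rewrite eq_sym => /negbTE ->.
Qed.

Lemma sum_partition_seq (T X : eqType) (V : nmodType) (l : seq T) (f : T -> X)
    (ds : seq X) (F : T -> V) :
  uniq ds -> (forall t, t \in l -> f t \in ds) ->
  \sum_(p <- ds) \sum_(t <- l | f t == p) F t = \sum_(t <- l) F t.
Proof.
move=> ds_uniq l_ds; rewrite (exchange_big_dep xpredT) //=.
rewrite big_seq [RHS]big_seq; apply: eq_bigr => t tl.
by rewrite big_mkcond /= sum_pred1_uniq ?l_ds.
Qed.

Lemma sum_count_mem (T : finType) (F : T -> nat) (w : seq T) :
  (\sum_(j <- w) F j = \sum_(i : T) count_mem i w * F i)%N.
Proof.
elim: w => [|x w IHw]; first by rewrite big_nil big1.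
rewrite big_cons IHw /=; under [RHS]eq_bigr do rewrite mulnDl.
rewrite big_split /=; congr (_ + _)%N.
rewrite (bigD1 x) //= eqxx mul1n big1 ?addn0 // => i /negbTE.
by rewrite eq_sym => ->.
Qed.

Lemma size_count_mem (T : finType) (w : seq T) :
  size w = (\sum_(i : T) count_mem i w)%N.
Proof. by rewrite -sum1_size sum_count_mem; under eq_bigr do rewrite muln1. Qed.

Section BigradedModule.
Variables (K : fieldType) (M : lmodType K) (s : nat) (deg : 'I_s -> nat)
  (Y : 'I_s -> M -> M) (G : int -> int -> M -> Prop).
Hypothesis HB : bigraded_module deg Y G.

Lemma Ylin i (a : K) (x y : M) : Y i (a *: x + y) = a *: Y i x + Y i y.
Proof. by case: HB => [[Y_lin _] _]; apply: Y_lin. Qed.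
Lemma Ycomm i j x : Y i (Y j x) = Y j (Y i x).
Proof. by case: HB => [[_ Y_comm] _]; apply: Y_comm. Qed.
Lemma G0 d k : G d k 0.
Proof. by case: HB => [_ [G_0 _]]. Qed.
Lemma Glin d k (a : K) (x y : M) : G d k x -> G d k y -> G d k (a *: x + y).
Proof. by case: HB => [_ [_ [G_lin _]]]; apply: G_lin. Qed.
Lemma Gdecomp (m : M) : exists (ds : seq (int * int)) (xs : int * int -> M),
  (forall p, p \in ds -> G p.1 p.2 (xs p)) /\ m = \sum_(p <- ds) xs p.
Proof. by case: HB => [_ [_ [_ [G_decomp _]]]]. Qed.
Lemma Gdirect (ds : seq (int * int)) (xs : int * int -> M) :
  uniq ds -> (forall p, p \in ds -> G p.1 p.2 (xs p)) ->
  \sum_(p <- ds) xs p = 0 -> forall p, p \in ds -> xs p = 0.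
Proof. by case: HB => [_ [_ [_ [_ [G_direct _]]]]]; apply: G_direct. Qed.
Lemma Gact i d k (x : M) : G d k x -> G (d + (deg i)%:Z) (k + 1) (Y i x).
Proof. by case: HB => [_ [_ [_ [_ [_ G_act]]]]]; apply: G_act. Qed.

Lemma Y0 i : Y i 0 = 0.
Proof.
have := Ylin i 1 0 0; rewrite !scale1r addr0 => /(congr1 (fun z => z - Y i 0)).
by rewrite addrK subrr.
Qed.
Lemma YD i x y : Y i (x + y) = Y i x + Y i y.
Proof. by rewrite -{1}(scale1r x) Ylin scale1r. Qed.
Lemma YZ i a x : Y i (a *: x) = a *: Y i x.
Proof. by rewrite -[a *: x]addr0 Ylin Y0 addr0. Qed.
Lemma Ysum i (I : Type) (r : seq I) (F : I -> M) :
  Y i (\sum_(j <- r) F j) = \sum_(j <- r) Y i (F j).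
Proof.
elim: r => [|x r IHr]; first by rewrite !big_nil Y0.
by rewrite !big_cons YD IHr.
Qed.

Lemma GZ d k (a : K) x : G d k x -> G d k (a *: x).
Proof. by move=> Gx; rewrite -[_ *: x]addr0; apply: Glin (G0 _ _). Qed.
Lemma GB d k x y : G d k x -> G d k y -> G d k (x - y).
Proof. by move=> Gx Gy; rewrite addrC -scaleN1r; apply: Glin. Qed.
Lemma Gsum d k (I : eqType) (r : seq I) (P : pred I) F :
  (forall i, i \in r -> P i -> G d k (F i)) -> G d k (\sum_(i <- r | P i) F i).
Proof.
move=> GF; rewrite big_seq_cond.
elim/big_rec: _ => [|i x /andP[ir Pi] Gx]; first exact: G0.
by rewrite -[F i]scale1r; apply: Glin => //; apply: GF.
Qed.

Lemma homogeneous_part (T : eqType) (l : seq T) (b : T -> int * int)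
    (x : T -> M) d k m :
  (forall t, t \in l -> G (b t).1 (b t).2 (x t)) ->
  G d k m -> m = \sum_(t <- l) x t -> m = \sum_(t <- l | b t == (d, k)) x t.
Proof.
move=> Gx Gm Em.
pose ds := undup ((d, k) :: map b l).
pose xs p := \sum_(t <- l | b t == p) x t - (if (d, k) == p then m else 0).
have dk_ds : (d, k) \in ds by rewrite mem_undup mem_head.
have: xs (d, k) = 0.
  apply: (@Gdirect ds xs (undup_uniq _)) => // [p _|].
    apply: GB; first by apply: Gsum => t tl /eqP <-; exact: Gx.
    by case: eqP => [<-|_]; [exact: Gm | exact: G0].
  rewrite /xs sumrB sum_partition_seq ?undup_uniq //; last first.
    by move=> t tl; rewrite mem_undup in_cons map_f ?orbT.
  by rewrite sum_pred1_uniq ?undup_uniq // -Em subrr.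
by rewrite /xs eqxx => /eqP; rewrite subr_eq0 => /eqP.
Qed.

(* The monomial y_w = prod_(j in w) y_j, given by a list w of variables, acts
   on M by iterating the y_j; its first degree is mono_deg w, its second degree
   is size w. *)
Definition Ymono (w : seq 'I_s) (h : M) : M := foldr Y h w.
Definition mono_deg (w : seq 'I_s) : nat := (\sum_(j <- w) deg j)%N.

Lemma Ymono0 w : Ymono w 0 = 0.
Proof. by elim: w => //= i w ->; exact: Y0. Qed.

Lemma Ymono_cat w1 w2 x : Ymono (w1 ++ w2) x = Ymono w1 (Ymono w2 x).
Proof. exact: foldr_cat. Qed.

Lemma Ymono_comm i w x : Y i (Ymono w x) = Ymono w (Y i x).
Proof. by elim: w => //= j w IHw; rewrite Ycomm IHw. Qed.

(* Since the variables commute, y_w = y_i * y_(w - i) when i occurs in w. *)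
Lemma Ymono_rem i w x : i \in w -> Ymono w x = Y i (Ymono (rem i w) x).
Proof.
elim: w => //= j w IHw; rewrite in_cons => /orP[/eqP ->|iw]; first by rewrite eqxx.
by case: eqP => [->//|_] /=; rewrite (IHw iw) Ycomm.
Qed.

Lemma mono_deg_rem i w : i \in w -> mono_deg w = (deg i + mono_deg (rem i w))%N.
Proof. by move=> iw; rewrite /mono_deg (perm_big _ (perm_to_rem iw)) big_cons. Qed.

Lemma Ymono_nseq_factor i N w x : (N <= count_mem i w)%N ->
  exists w', Ymono w x = Ymono w' (Ymono (nseq N i) x).
Proof.
elim: N w => [|N IHN] w le_N; first by exists w.
have iw : i \in w by rewrite -has_pred1 has_count; apply: leq_trans le_N.
move: le_N; rewrite (permP (perm_to_rem iw)) /= eqxx add1n ltnS.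
by move=> /IHN [w' Ew']; exists w'; rewrite (Ymono_rem x iw) Ew' Ymono_comm.
Qed.

Lemma Ymono_nseq_mono N N' i h :
  (N <= N')%N -> Ymono (nseq N i) h = 0 -> Ymono (nseq N' i) h = 0.
Proof. by move=> le_N E; rewrite -(subnK le_N) nseqD Ymono_cat E Ymono0. Qed.

Lemma G_Ymono d k h w :
  G d k h -> G (d + (mono_deg w)%:Z) (k + (size w)%:Z) (Ymono w h).
Proof.
elim: w => [|i w IHw] Gh /=; first by rewrite /mono_deg big_nil !addr0.
have -> : d + (mono_deg (i :: w))%:Z = d + (mono_deg w)%:Z + (deg i)%:Z.
  by rewrite /mono_deg big_cons; lia.
have -> : k + (size w).+1%:Z = k + (size w)%:Z + 1 by lia.
exact/Gact/IHw.
Qed.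

(* A (tagged) generator is a pair of a bidegree and an element; a term
   a * y_w * g is a coefficient, a monomial and a generator. *)
Definition term := (K * seq 'I_s * ((int * int) * M))%type.
Definition term_val (t : term) : M := t.1.1 *: Ymono t.1.2 t.2.2.

Definition spans (hg : seq ((int * int) * M)) (x : M) : Prop :=
  exists l : seq term, (forall t, t \in l -> t.2 \in hg) /\
    x = \sum_(t <- l) term_val t.

Lemma spans_generated hg gens : (forall x, x \in gens -> spans hg x) ->
  forall m, generated_by Y gens m -> spans hg m.
Proof.
move=> gens_hg m; elim=> {m} [x /gens_hg //||x y _ [l1 [hg1 ->]] _ [l2 [hg2 ->]]
    |a x _ [l [hgl ->]]|i x _ [l [hgl ->]]].
- by exists [::]; rewrite big_nil.
- exists (l1 ++ l2); rewrite big_cat; split=> // t.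
  by rewrite mem_cat => /orP[/hg1|/hg2].
- exists [seq (a * t.1.1, t.1.2, t.2) | t : term <- l]; split.
    by move=> t /mapP[u ul ->]; exact: hgl ul.
  by rewrite big_map scaler_sumr; apply: eq_bigr => t _; rewrite /term_val scalerA.
- exists [seq (t.1.1, i :: t.1.2, t.2) | t : term <- l]; split.
    by move=> t /mapP[u ul ->]; exact: hgl ul.
  by rewrite big_map Ysum; apply: eq_bigr => t _; rewrite /term_val YZ.
Qed.

(* A finitely generated bigraded module has finitely many homogeneous
   generators: split each generator into its homogeneous components. *)
Lemma homogeneous_generators : finitely_generated Y ->
  exists hg : seq ((int * int) * M),
    (forall q, q \in hg -> G q.1.1 q.1.2 q.2) /\ forall m, spans hg m.
Proof.
move=> [gens gens_gen].
suff [hg [hg_homog gens_hg]] : exists hg : seq ((int * int) * M),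
    (forall q, q \in hg -> G q.1.1 q.1.2 q.2) /\ forall x, x \in gens -> spans hg x.
  by exists hg; split=> // m; exact: spans_generated gens_hg _ (gens_gen m).
elim: gens {gens_gen} => [|x gens [hg [hg_homog gens_hg]]]; first by exists [::].
have [ds [xs [Gxs Ex]]] := Gdecomp x.
exists ([seq (p, xs p) | p <- ds] ++ hg); split.
  by move=> q; rewrite mem_cat => /orP[/mapP[p pd ->]|/hg_homog //]; exact: Gxs.
move=> y; rewrite in_cons => /orP[/eqP ->|/gens_hg [l [l_hg ->]]]; last first.
  by exists l; split=> // t /l_hg th; rewrite mem_cat th orbT.
exists [seq (1, [::], (p, xs p)) | p <- ds]; split.
  by move=> t /mapP[p pd ->]; rewrite mem_cat (map_f (fun p => (p, xs p))) ?pd.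
by rewrite big_map Ex; apply: eq_bigr => p _; rewrite /term_val scale1r.
Qed.

Lemma support_monomial hg :
  (forall q, q \in hg -> G q.1.1 q.1.2 q.2) -> (forall m, spans hg m) ->
  forall d k, comp_nz G d k -> exists q w, q \in hg /\ Ymono w q.2 <> 0 /\
    d = q.1.1 + (mono_deg w)%:Z /\ k = q.1.2 + (size w)%:Z.
Proof.
move=> hg_homog hg_spans d k [m [Gm m_nz]].
have [l [l_hg Em]] := hg_spans m.
pose b (t : term) := (t.2.1.1 + (mono_deg t.1.2)%:Z, t.2.1.2 + (size t.1.2)%:Z).
apply: NNPP => none; apply: m_nz.
rewrite (homogeneous_part (b := b) _ Gm Em) ?big1_seq // => t.
  case/andP=> /eqP [Ed Ek] tl.
  rewrite /term_val; case: (classic (Ymono t.1.2 t.2.2 = 0)) => [->|nz].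
    exact: scaler0.
  by case: none; exists t.2, t.1.2; rewrite -Ed -Ek; split; [exact: l_hg|].
by move=> tl; apply/GZ/G_Ymono/hg_homog/l_hg.
Qed.

Lemma mono_deg_nseq n i : mono_deg (nseq n i) = (n * deg i)%N.
Proof. by elim: n => [|n IHn]; rewrite /mono_deg ?big_nil // big_cons -/(mono_deg _) IHn mulSn. Qed.

Definition nonnilpotent i (h : M) : Prop := forall N, Ymono (nseq N i) h <> 0.

Definition nilpotency_bounded_by (B : nat) (h : M) : Prop :=
  forall i, ~ nonnilpotent i h -> Ymono (nseq B i) h = 0.

Section BoundedNilpotency.
Variables (B : nat) (h : M).
Hypothesis h_bounded : nilpotency_bounded_by B h.

Lemma count_lt_nilpotent i w :
  ~ nonnilpotent i h -> Ymono w h <> 0 -> (count_mem i w < B)%N.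
Proof.
move=> nil_i nz; rewrite ltnNge; apply/negP => /(Ymono_nseq_factor h) [w' Ew].
by apply: nz; rewrite Ew h_bounded // Ymono0.
Qed.

Lemma long_monomial_free_var w :
  Ymono w h <> 0 -> (s * B < size w)%N -> exists2 i, i \in w & nonnilpotent i h.
Proof.
move=> nz long; apply: NNPP => no_free.
suff: (size w <= s * B)%N by rewrite leqNgt long.
have -> : (s * B = \sum_(i < s) B)%N by rewrite sum_nat_const card_ord.
rewrite size_count_mem.
apply: leq_sum => i _; case iw : (i \in w); last by rewrite (count_memPn (negbT iw)).
apply: ltnW (count_lt_nilpotent _ nz) => free_i.
by apply: no_free; exists i.
Qed.

Lemma mono_deg_upper c w : (forall i, nonnilpotent i h -> (deg i <= c)%N) ->
  Ymono w h <> 0 -> (mono_deg w <= c * size w + B * \sum_(i < s) deg i)%N.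
Proof.
move=> c_max nz.
rewrite /mono_deg sum_count_mem size_count_mem !big_distrr -big_split /=.
apply: leq_sum => i _; case: (classic (nonnilpotent i h)) => free_i.
  by rewrite mulnC; apply: leq_trans (leq_addr _ _); apply: leq_mul => //; apply: c_max.
by apply: leq_trans (leq_addl _ _); apply: leq_mul (ltnW (count_lt_nilpotent free_i nz)) (leqnn _).
Qed.

Lemma mono_deg_lower a w : (forall i, nonnilpotent i h -> (a <= deg i)%N) ->
  Ymono w h <> 0 -> (a * size w <= mono_deg w + a * (s * B))%N.
Proof.
move=> a_min nz.
have -> : (a * (s * B) = \sum_(i < s) a * B)%N.
  by rewrite sum_nat_const card_ord mulnCA.
rewrite /mono_deg sum_count_mem size_count_mem !big_distrr -big_split /=.
apply: leq_sum => i _; case: (classic (nonnilpotent i h)) => free_i.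
  by rewrite mulnC; apply: leq_trans (leq_addr _ _); apply: leq_mul => //; apply: a_min.
by apply: leq_trans (leq_addl _ _); apply: leq_mul (leqnn _) (ltnW (count_lt_nilpotent free_i nz)).
Qed.

End BoundedNilpotency.

Section Generators.
Variable hg : seq ((int * int) * M).
Hypothesis hg_homog : forall q, q \in hg -> G q.1.1 q.1.2 q.2.
Hypothesis hg_spans : forall m, spans hg m.

Lemma nilpotency_bound : exists B, forall q, q \in hg -> nilpotency_bounded_by B q.2.
Proof.
have B_mono h N N' : (N <= N')%N -> nilpotency_bounded_by N h -> nilpotency_bounded_by N' h.
  by move=> le_N N_bounds i /N_bounds; exact: Ymono_nseq_mono.
apply: uniform_bound_seq => [q N N'|q _]; first exact: B_mono.
have per_var i : exists N, ~ nonnilpotent i q.2 -> Ymono (nseq N i) q.2 = 0.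
  case: (classic (nonnilpotent i q.2)) => [free_i|/not_all_ex_not [N /NNPP]].
    by exists 0%N => /(_ free_i).
  by exists N.
have [N N_bounds] := @uniform_bound_seq _ (enum 'I_s)
  (fun i N => ~ nonnilpotent i q.2 -> Ymono (nseq N i) q.2 = 0)
  (fun i N N' le_N bnd nil_i => Ymono_nseq_mono le_N (bnd nil_i)) (fun i _ => per_var i).
by exists N => i; apply: N_bounds; rewrite mem_enum.
Qed.

Lemma monomial_comp_nz q w : q \in hg -> Ymono w q.2 <> 0 ->
  comp_nz G (q.1.1 + (mono_deg w)%:Z) (q.1.2 + (size w)%:Z).
Proof. by move=> qhg nz; exists (Ymono w q.2); split=> //; apply/G_Ymono/hg_homog. Qed.

Lemma free_witness q i k : q \in hg -> nonnilpotent i q.2 -> q.1.2 <= k ->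
  comp_nz G (q.1.1 + (deg i)%:Z * (k - q.1.2)) k.
Proof.
move=> qhg free_i le_k; pose n := absz (k - q.1.2)%R.
have En : n%:Z = k - q.1.2 by rewrite gez0_abs ?subr_ge0.
have := monomial_comp_nz qhg (free_i n).
rewrite mono_deg_nseq size_nseq PoszM En mulrC.
by have -> : q.1.2 + (k - q.1.2) = k by lia.
Qed.

Section UniformNilpotency.
Variable B : nat.
Hypothesis B_bounds : forall q, q \in hg -> nilpotency_bounded_by B q.2.

Lemma component_step : exists k1, forall k d, k1 <= k -> comp_nz G d (k + 1) ->
  exists q i d', [/\ q \in hg, nonnilpotent i q.2, comp_nz G d' k
                   & d = d' + (deg i)%:Z].
Proof.
have [kmax kmax_ge] := int_bound_seq hg (fun q => q.1.2).
exists (kmax + (s * B)%N%:Z) => k d kk.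
move=> /(support_monomial hg_homog hg_spans) [q [w [qhg [nz [-> Ek]]]]].
have long : (s * B < size w)%N.
  have kq : q.1.2 <= kmax := kmax_ge q qhg.
  by rewrite -ltz_nat; move: kq kk Ek; set sB := (s * B)%N; lia.
have [i iw free_i] := long_monomial_free_var (B_bounds qhg) nz long.
have nz' : Ymono (rem i w) q.2 <> 0.
  by move=> E; apply: nz; rewrite (Ymono_rem _ iw) E Y0.
have Esize : size w = (size (rem i w)).+1 by rewrite (perm_size (perm_to_rem iw)).
exists q, i, (q.1.1 + (mono_deg (rem i w))%:Z); split=> //.
  have := monomial_comp_nz qhg nz'.
  by have -> : q.1.2 + (size (rem i w))%:Z = k by move: Ek; rewrite Esize; lia.
by rewrite (mono_deg_rem iw); lia.
Qed.

Lemma eventual_vanishing : (forall q i, q \in hg -> ~ nonnilpotent i q.2) ->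
  exists k0, forall k, k0 <= k -> forall d, ~ comp_nz G d k.
Proof.
move=> no_free; have [k1 step] := component_step.
exists (k1 + 1) => k kk d dk.
have k1k : k1 <= k - 1 by lia.
have dk' : comp_nz G d (k - 1 + 1) by rewrite subrK.
have [q [i [d' [qhg free_i _ _]]]] := step _ _ k1k dk'.
exact: no_free qhg free_i.
Qed.

Lemma omega_upper_bound c :
  (forall q i, q \in hg -> nonnilpotent i q.2 -> (deg i <= c)%N) ->
  exists C, forall d k, comp_nz G d k -> d <= c%:Z * k + C.
Proof.
move=> c_max; set BD := (B * \sum_(i < s) deg i)%N.
have [emax emax_ge] := int_bound_seq hg (fun q => q.1.1).
have [kmin kmin_ge] := int_bound_seq hg (fun q => - q.1.2).
exists (emax + c%:Z * kmin + BD%:Z) => d k.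
move=> /(support_monomial hg_homog hg_spans) [q [w [qhg [nz [-> ->]]]]].
have := mono_deg_upper (B_bounds qhg) (fun i => c_max q i qhg) nz.
rewrite -/BD -lez_nat PoszD PoszM.
have eq : q.1.1 <= emax := emax_ge q qhg.
have kq : - q.1.2 <= kmin := kmin_ge q qhg.
nia.
Qed.

Lemma alpha_lower_bound a :
  (forall q i, q \in hg -> nonnilpotent i q.2 -> (a <= deg i)%N) ->
  exists C, forall d k, comp_nz G d k -> a%:Z * k + C <= d.
Proof.
move=> a_min; set aSB := (a * (s * B))%N.
have [emin emin_ge] := int_bound_seq hg (fun q => - q.1.1).
have [kmax kmax_ge] := int_bound_seq hg (fun q => q.1.2).
exists (- emin - a%:Z * kmax - aSB%:Z) => d k.
move=> /(support_monomial hg_homog hg_spans) [q [w [qhg [nz [-> ->]]]]].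
have := mono_deg_lower (B_bounds qhg) (fun i => a_min q i qhg) nz.
rewrite -/aSB -lez_nat PoszD PoszM.
have eq : - q.1.1 <= emin := emin_ge q qhg.
have kq : q.1.2 <= kmax := kmax_ge q qhg.
nia.
Qed.

(* If some variable acts non-nilpotently on some generator, omega_M is
   eventually linear, its slope being the largest degree of such a variable. *)
Lemma omega_eventually_linear : (exists q i, q \in hg /\ nonnilpotent i q.2) ->
  exists c e k0, forall k, k0 <= k -> is_omega G k (c * k + e).
Proof.
move=> [q0 [i0 [q0hg free0]]].
pose free_deg v := exists q i, [/\ q \in hg, nonnilpotent i q.2 & v = (deg i)%:Z].
have [|v [q [i [_ _ ->]]]|_ [[q [i [qhg free_i ->]]] c_max]] :=
  @int_max_ex free_deg (\max_(j < s) deg j)%N%:Z.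
- by exists (deg i0)%:Z, q0, i0.
- by rewrite lez_nat leq_bigmax.
have deg_le q' i' : q' \in hg -> nonnilpotent i' q'.2 -> (deg i' <= deg i)%N.
  by move=> q'hg free'; rewrite -lez_nat; apply: c_max; exists q', i'.
have [C1 upper] := omega_upper_bound deg_le.
have [k1 step] := component_step.
have [||| e [k0 lin]] := @eventually_linear_max (fun k d => comp_nz G d k)
  (deg i)%:Z (q.1.1 - (deg i)%:Z * q.1.2) C1 (Num.max k1 q.1.2).
- by move=> k d _; exact: upper.
- move=> k; rewrite ge_max => /andP[_ le_k]; have := free_witness qhg free_i le_k.
  by have -> : q.1.1 + (deg i)%:Z * (k - q.1.2) =
    (deg i)%:Z * k + (q.1.1 - (deg i)%:Z * q.1.2) by lia.
- move=> k d; rewrite ge_max => /andP[kk _] /(step _ _ kk).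
  move=> [q' [i' [d' [q'hg free' d'k ->]]]]; exists d' => //.
  by have := deg_le _ _ q'hg free'; rewrite -lez_nat; lia.
by exists (deg i)%:Z, e, k0.
Qed.

(* Likewise alpha_M is eventually linear, with slope the smallest such degree. *)
Lemma alpha_eventually_linear : (exists q i, q \in hg /\ nonnilpotent i q.2) ->
  exists a b k0, forall k, k0 <= k -> is_alpha G k (a * k + b).
Proof.
move=> [q0 [i0 [q0hg free0]]].
pose free_deg v := exists q i, [/\ q \in hg, nonnilpotent i q.2 & v = (deg i)%:Z].
have [|v [q [i [_ _ ->]]]|_ [[q [i [qhg free_i ->]]] a_min]] :=
  @int_min_ex free_deg 0.
- by exists (deg i0)%:Z, q0, i0.
- by [].
have deg_ge q' i' : q' \in hg -> nonnilpotent i' q'.2 -> (deg i <= deg i')%N.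
  by move=> q'hg free'; rewrite -lez_nat; apply: a_min; exists q', i'.
have [C1 lower] := alpha_lower_bound deg_ge.
have [k1 step] := component_step.
have [||| b [k0 lin]] := @eventually_linear_min (fun k d => comp_nz G d k)
  (deg i)%:Z (q.1.1 - (deg i)%:Z * q.1.2) C1 (Num.max k1 q.1.2).
- by move=> k d _; exact: lower.
- move=> k; rewrite ge_max => /andP[_ le_k]; have := free_witness qhg free_i le_k.
  by have -> : q.1.1 + (deg i)%:Z * (k - q.1.2) =
    (deg i)%:Z * k + (q.1.1 - (deg i)%:Z * q.1.2) by lia.
- move=> k d; rewrite ge_max => /andP[kk _] /(step _ _ kk).
  move=> [q' [i' [d' [q'hg free' d'k ->]]]]; exists d' => //.
  by have := deg_ge _ _ q'hg free'; rewrite -lez_nat; lia.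
by exists (deg i)%:Z, b, k0.
Qed.

End UniformNilpotency.
End Generators.
End BigradedModule.

Theorem proposition2p5 (K : fieldType) (s : nat) (deg : 'I_s -> nat)
    (M : lmodType K) (Y : 'I_s -> M -> M) (G : int -> int -> M -> Prop) :
  (forall i, (0 < deg i)%N) ->
  bigraded_module deg Y G ->
  finitely_generated Y ->
  (exists k0 : int, forall k : int, k0 <= k -> forall d : int, ~ comp_nz G d k) \/
  (exists a b c e : int, exists k0 : int, forall k : int, k0 <= k ->
      is_alpha G k (a * k + b) /\ is_omega G k (c * k + e)).
Proof.
move=> _ HB fin_gen.
have [hg [hg_homog hg_spans]] := homogeneous_generators HB fin_gen.
have [B B_bounds] := nilpotency_bound HB hg.
case: (classic (exists q i, q \in hg /\ nonnilpotent Y i q.2)) => [free|no_free].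
  right.
  have [a [b [k0 alpha_lin]]] := alpha_eventually_linear HB hg_homog hg_spans B_bounds free.
  have [c [e [k1 omega_lin]]] := omega_eventually_linear HB hg_homog hg_spans B_bounds free.
  exists a, b, c, e, (Num.max k0 k1) => k; rewrite ge_max => /andP[k0k k1k].
  by split; [exact: alpha_lin | exact: omega_lin].
left; apply: (eventual_vanishing HB hg_homog hg_spans B_bounds) => q i qhg free.
by apply: no_free; exists q, i.
Qed.
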